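(* Let $\mathcal D=(C_1,C_2,C_3,C_4)$ be any ordered, oriented Descartes configuration and fix $i\in\{1,2,3,4\}$. Let $C_i'$ be the unique circle (or line), different from $C_i$, that is tangent to the three circles $C_j$, $j\neq i$, at points distinct from their mutual tangency points, and orient it so that the configuration $\mathcal D'$ obtained from $\mathcal D$ by replacing $C_i$ with $C_i'$ (keeping the other three oriented circles) is an oriented Descartes configuration. Then $\mathbf W_{\mathcal D'}=\mathbf S_i\mathbf W_{\mathcal D}$, where $\mathbf S_i$ is the $4\times4$ matrix that agrees with the identity except in row $i$, whose entries are $-1$ in position $i$ and $2$ in the other three positions. (Equivalently, $\mathcal D'$ is the image of $\mathcal D$ under inversion in the circle through the three tangency points of $\mathcal D$ not lying on $C_i$.)
   Context: Oriented circles: radius $r$, oriented curvature $\pm1/r$, $+$ iff the interior is the bounded open disk; oriented lines have curvature $0$, unit normal $\mathbf h$, interior the open half-plane into which $\mathbf h$ points. A Descartes configuration: four mutually tangent circles/lines with six distinct tangency points (parallel lines tangent at $\infty$); oriented if the four interiors are pairwise disjoint or become so after reversing all orientations. Augmented curvature-center coordinates: for center $\mathbf c$ and oriented radius $r$, $\mathbf w(C)=((|\mathbf c|^2-r^2)/r,1/r,c_1/r,c_2/r)$; for the line $\mathbf x\cdot\mathbf h=m$ with interior-pointing unit normal $\mathbf h$, $\mathbf w(C)=(2m,0,h_1,h_2)$. $\mathbf W_{\mathcal D}$ is the $4\times4$ matrix with $i$-th row $\mathbf w(C_i)$. *)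

From HB Require Import structures.
From mathcomp Require Import all_boot all_order all_algebra.
From mathcomp Require Import reals.
Set Implicit Arguments. Unset Strict Implicit. Unset Printing Implicit Defensive.
Import Order.TTheory GRing.Theory Num.Theory.
Local Open Scope ring_scope.

Section Descartes.
Variable R : realType.

Definition point := (R * R)%type.

(* OCirc c1 c2 r : circle of center (c1,c2), radius |r|, oriented radius r
     (r > 0 : interior is the bounded open disk; r < 0 : interior is the
      complement of the closed disk).
   OLine h1 h2 m : the line x . h = m with unit normal h = (h1,h2) pointing
     into the interior, the open half-plane x . h > m. *)
Inductive ocircle :=
  | OCirc of R & R & R
  | OLine of R & R & R.

Definition valid (C : ocircle) : Prop :=
  match C with
  | OCirc _ _ r => r != 0
  | OLine h1 h2 _ => h1 ^+ 2 + h2 ^+ 2 = 1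
  end.

Definition is_line (C : ocircle) : Prop :=
  match C with OLine _ _ _ => True | _ => False end.

Definition on (C : ocircle) (p : point) : Prop :=
  match C with
  | OCirc c1 c2 r => (p.1 - c1) ^+ 2 + (p.2 - c2) ^+ 2 = r ^+ 2
  | OLine h1 h2 m => p.1 * h1 + p.2 * h2 = m
  end.

Definition interior (C : ocircle) (p : point) : Prop :=
  match C with
  | OCirc c1 c2 r =>
      if 0 < r then (p.1 - c1) ^+ 2 + (p.2 - c2) ^+ 2 < r ^+ 2
      else r ^+ 2 < (p.1 - c1) ^+ 2 + (p.2 - c2) ^+ 2
  | OLine h1 h2 m => m < p.1 * h1 + p.2 * h2
  end.

Definition reverse (C : ocircle) : ocircle :=
  match C with
  | OCirc c1 c2 r => OCirc c1 c2 (- r)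
  | OLine h1 h2 m => OLine (- h1) (- h2) (- m)
  end.

(* tangency points live in the extended plane: Some p is a finite point,
   None is the point at infinity. *)
Definition tangent_at (C D : ocircle) (q : option point) : Prop :=
  match q with
  | Some p => ~ (is_line C /\ is_line D) /\
              (forall y, (on C y /\ on D y) <-> y = p)
  | None => is_line C /\ is_line D /\ (forall y, ~ (on C y /\ on D y))
  end.

Definition tangent (C D : ocircle) : Prop := exists q, tangent_at C D q.

Definition descartes (D : 'I_4 -> ocircle) : Prop :=
  (forall i, valid (D i)) /\
  (forall i j, i != j -> tangent (D i) (D j)) /\
  (forall i j k l q q', i != j -> k != l ->
      tangent_at (D i) (D j) q -> tangent_at (D k) (D l) q' -> q = q' ->
      [set i; j] = [set k; l]).

Definition disjoint_interiors (D : 'I_4 -> ocircle) : Prop :=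
  forall i j, i != j -> forall p, ~ (interior (D i) p /\ interior (D j) p).

Definition oriented_descartes (D : 'I_4 -> ocircle) : Prop :=
  descartes D /\
  (disjoint_interiors D \/ disjoint_interiors (fun i => reverse (D i))).

Definition wvec (C : ocircle) : seq R :=
  match C with
  | OCirc c1 c2 r => [:: (c1 ^+ 2 + c2 ^+ 2 - r ^+ 2) / r; r^-1; c1 / r; c2 / r]
  | OLine h1 h2 m => [:: 2 * m; 0; h1; h2]
  end.

Definition Wmx (D : 'I_4 -> ocircle) : 'M[R]_4 :=
  \matrix_(i, j) nth 0 (wvec (D i)) j.

Definition Smx (i : 'I_4) : 'M[R]_4 :=
  \matrix_(k, l) if k == i then (if l == i then -1 else 2)
                 else (k == l)%:R.

Definition replace (D : 'I_4 -> ocircle) (i : 'I_4) (C : ocircle) :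
  'I_4 -> ocircle := fun j => if j == i then C else D j.

Definition is_reflected (D : 'I_4 -> ocircle) (i : 'I_4) (C : ocircle) : Prop :=
  valid C /\
  (exists p, on C p <> on (D i) p) /\
  (forall j, j != i -> tangent C (D j)) /\
  (forall j k l q q', j != i -> k != i -> l != i -> k != l ->
      tangent_at C (D j) q -> tangent_at (D k) (D l) q' -> q <> q') /\
  oriented_descartes (replace D i C).

End Descartes.

(* Augmented curvature-center coordinates identify an oriented circle with a vector of
   norm 1 for the Lorentz form Q(x, y) = x3 y3 + x4 y4 - (x1 y2 + x2 y1) / 2, and a point p
   of the extended plane with a null vector n(p); p lies on, inside or outside C according
   to the sign of Q(w(C), n(p)). Tangency forces Q(w, w')^2 = 1 and disjoint interiors rule
   out the value 1, so the rows w_k of W_D have Gram matrix G = 2I - J. As G^2 = 4I, the rows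
   form a basis and every n satisfies 4 Q(n, n) = 2 sum y_k^2 - (sum y_k)^2, y_k = Q(w_k, n).
   For n = w(C_i') this makes y_i a root of t^2 + 6t - 7: the root 1 means C_i' = C_i, the
   root -7 means w(C_i') = 2 sum_(j <> i) w_j - w_i, the i-th row of S_i W_D. Conversely this
   vector has norm 1, hence is a circle, and the same identity applied to the null vectors
   n(p) gives the tangencies, the distinct tangency points and the disjoint interiors of the
   new configuration. *)

From HB Require Import structures.
From mathcomp Require Import all_boot all_order all_algebra.
From mathcomp Require Import reals ring lra.
Set Implicit Arguments. Unset Strict Implicit. Unset Printing Implicit Defensive.
Import Order.TTheory GRing.Theory Num.Theory.
Local Open Scope ring_scope.

Section Descartes.
Variable R : realType.
Local Notation vec := 'rV[R]_4.

Definition o0 : 'I_4 := @Ordinal 4 0 isT.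
Definition o1 : 'I_4 := @Ordinal 4 1 isT.
Definition o2 : 'I_4 := @Ordinal 4 2 isT.
Definition o3 : 'I_4 := @Ordinal 4 3 isT.

Lemma ord4P (k : 'I_4) : k = o0 \/ k = o1 \/ k = o2 \/ k = o3.
Proof.
case: k => [[|[|[|[|m]]]] Hm] //; rewrite /o0 /o1 /o2 /o3.
- by left; apply/val_inj.
- by right; left; apply/val_inj.
- by right; right; left; apply/val_inj.
- by right; right; right; apply/val_inj.
Qed.

Ltac case_ord4 k := case: (ord4P k) => [->|[->|[->|->]]].

Section LorentzForm.
Implicit Types (x y z n : vec) (u : 'I_4 -> R).

Lemma sum_ord4 u : \sum_k u k = u o0 + u o1 + u o2 + u o3.
Proof.
rewrite !big_ord_recr big_ord0 /= add0r.
by congr (_ + _ + _ + _); congr u; apply/val_inj.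
Qed.

Definition row4 (a b c d : R) : vec := \row_j nth 0 [:: a; b; c; d] j.

Lemma row4P x y :
  [/\ x ord0 o0 = y ord0 o0, x ord0 o1 = y ord0 o1,
      x ord0 o2 = y ord0 o2 & x ord0 o3 = y ord0 o3] -> x = y.
Proof. by case=> *; apply/rowP => j; case_ord4 j. Qed.

(** * The Lorentz form of signature (3,1) *)

Definition lorentz x y : R :=
  x ord0 o2 * y ord0 o2 + x ord0 o3 * y ord0 o3
  - (x ord0 o0 * y ord0 o1 + x ord0 o1 * y ord0 o0) / 2.

Lemma lorentz_row4 a b c d a' b' c' d' :
  lorentz (row4 a b c d) (row4 a' b' c' d') = c * c' + d * d' - (a * b' + b * a') / 2.
Proof. by rewrite /lorentz !mxE. Qed.

Lemma lorentzC x y : lorentz x y = lorentz y x.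
Proof. rewrite /lorentz; ring. Qed.

Lemma lorentzDl x y z : lorentz (x + y) z = lorentz x z + lorentz y z.
Proof. rewrite /lorentz !mxE; ring. Qed.

Lemma lorentzZl a x z : lorentz (a *: x) z = a * lorentz x z.
Proof. rewrite /lorentz !mxE; ring. Qed.

Lemma lorentzNl x z : lorentz (- x) z = - lorentz x z.
Proof. by rewrite -scaleN1r lorentzZl mulN1r. Qed.

Lemma lorentzBl x y z : lorentz (x - y) z = lorentz x z - lorentz y z.
Proof. by rewrite lorentzDl lorentzNl. Qed.

Lemma lorentz_suml (I : Type) (r : seq I) (P : pred I) (F : I -> vec) z :
  lorentz (\sum_(l <- r | P l) F l) z = \sum_(l <- r | P l) lorentz (F l) z.
Proof.
elim/big_rec2: _ => [|l y1 y2 _ <-]; last by rewrite lorentzDl.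
by rewrite -(scale0r 0) lorentzZl mul0r.
Qed.

Lemma lorentzNr x z : lorentz z (- x) = - lorentz z x.
Proof. by rewrite lorentzC lorentzNl lorentzC. Qed.

Lemma lorentzBr x y z : lorentz z (x - y) = lorentz z x - lorentz z y.
Proof. by rewrite lorentzC lorentzBl !(lorentzC z). Qed.

Definition lorentz_mx : 'M[R]_4 := \matrix_(a, b)
  if [|| (a == o0) && (b == o1) | (a == o1) && (b == o0)] then - 2^-1
  else ((a == b) && ((a == o2) || (a == o3)))%:R.

Lemma lorentz_mxT : lorentz_mx^T = lorentz_mx.
Proof. by apply/matrixP => a b; rewrite !mxE; case_ord4 a; case_ord4 b. Qed.

Lemma lorentz_mxE x y : lorentz x y = (x *m lorentz_mx *m y^T) ord0 ord0.
Proof. by rewrite !mxE sum_ord4 !mxE !sum_ord4 !mxE /lorentz /=; ring. Qed.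

(** * Quadruples of vectors with the Gram matrix of a Descartes configuration *)

Definition gram_mx : 'M[R]_4 := \matrix_(a, b) if a == b then 1 else -1.

Lemma gram_mx_sqr : gram_mx *m gram_mx = 4%:M.
Proof.
apply/matrixP => a b; rewrite !mxE sum_ord4 !mxE.
by case_ord4 a; case_ord4 b; rewrite /=; ring.
Qed.

Definition descartes_quad u : R := 2 * \sum_k u k ^+ 2 - (\sum_k u k) ^+ 2.

Lemma descartes_quad_gram (c : 'cV[R]_4) :
  4 * (c^T *m (4^-1 *: gram_mx) *m c) ord0 ord0 = descartes_quad (fun k => c k ord0).
Proof. by rewrite /descartes_quad mxE !sum_ord4 !mxE !sum_ord4 !mxE /=; field. Qed.

(* Vieta: as a quadratic in [u i], the Descartes form has the roots [u i] and
   [2 * \sum_(l | l != i) u l - u i]. *)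
Lemma descartes_quad_reflect u i : descartes_quad u = 0 ->
  u i * (2 * \sum_(l | l != i) u l - u i)
  = 2 * \sum_(l | l != i) u l ^+ 2 - (\sum_(l | l != i) u l) ^+ 2.
Proof. by rewrite /descartes_quad (bigD1 i) //= (bigD1 i (P := xpredT)) //=; lra. Qed.

Lemma descartes_quad_reflect_lt0 u i j : descartes_quad u = 0 -> i != j ->
  0 < u j -> (forall m, m != j -> u m <= 0) -> 2 * \sum_(l | l != i) u l - u i < 0.
Proof.
move=> quad0 ij uj_gt0 u_le0.
have prod_pos : 0 < 2 * \sum_(l | l != i) u l ^+ 2 - (\sum_(l | l != i) u l) ^+ 2.
  have uju m : m != j -> u j * u m <= 0.
    by move=> mj; rewrite mulr_ge0_le0 ?u_le0 // ltW.
  have sq m m' : 0 <= (u m - u m') ^+ 2 := sqr_ge0 _.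
  have := sq o0 o1; have := sq o0 o2; have := sq o0 o3.
  have := sq o1 o2; have := sq o1 o3; have := sq o2 o3.
  rewrite big_mkcond [X in _ - X ^+ 2]big_mkcond !sum_ord4 /=.
  move: ij uj_gt0 uju; case_ord4 i; case_ord4 j => //= _ uj_gt0 uju;
    try have := uju o0 isT; try have := uju o1 isT;
    try have := uju o2 isT; try have := uju o3 isT; intros; nra.
rewrite ltNge; apply/negP => z_ge0.
have := mulr_le0_ge0 (u_le0 i ij) z_ge0.
by rewrite (descartes_quad_reflect i quad0) leNgt prod_pos.
Qed.

Lemma descartes_quad_sum0 u :
  \sum_k u k = 0 -> descartes_quad u = 0 -> forall k, u k = 0.
Proof.
rewrite /descartes_quad => -> /eqP; rewrite expr0n subr0 mulf_eq0 pnatr_eq0 /=.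
move=> /eqP sq0 k; apply/eqP; rewrite -sqrf_eq0; apply/eqP.
by apply: (psumr_eq0P _ sq0) => // l _; exact: sqr_ge0.
Qed.

Lemma descartes_quad_three0 u a b c : a != b -> a != c -> b != c ->
  u a = 0 -> u b = 0 -> u c = 0 -> descartes_quad u = 0 -> forall m, u m = 0.
Proof.
rewrite /descartes_quad !sum_ord4 => ab ac bc ua ub uc quad0 m.
move: ab ac bc ua ub uc; case_ord4 a; case_ord4 b; case_ord4 c => // _ _ _ ua ub uc;
  rewrite ?ua ?ub ?uc in quad0; case_ord4 m; rewrite ?ua ?ub ?uc //; nra.
Qed.

Definition descartes_frame (f : 'I_4 -> vec) : Prop :=
  forall a b, lorentz (f a) (f b) = if a == b then 1 else -1.

Section Frame.
Variable f : 'I_4 -> vec.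
Hypothesis frame_f : descartes_frame f.

Local Notation F := (\matrix_k f k).

Lemma frame_coord n k : (F *m lorentz_mx *m n^T) k ord0 = lorentz (f k) n.
Proof. by rewrite lorentz_mxE -(rowK f k) -!row_mul [RHS]mxE. Qed.

Lemma frame_gram : F *m lorentz_mx *m F^T = gram_mx.
Proof.
apply/matrixP => a b; rewrite [RHS]mxE -frame_f lorentz_mxE !mxE.
apply: eq_bigr => j _; rewrite !mxE; congr (_ * _).
by apply: eq_bigr => l _; rewrite !mxE.
Qed.

Let F_inv := 4^-1 *: (F^T *m gram_mx).

Lemma frame_left_inv : F_inv *m (F *m lorentz_mx) = 1%:M.
Proof.
apply: mulmx1C; rewrite /F_inv -scalemxAr mulmxA frame_gram gram_mx_sqr.
by rewrite -scalemx1 scalerA mulVf ?scale1r // pnatr_eq0.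
Qed.

Lemma frame_nondegenerate n : (forall k, lorentz (f k) n = 0) -> n = 0.
Proof.
move=> n_perp; have Fn0 : F *m lorentz_mx *m n^T = 0.
  by apply/matrixP => k j; rewrite (ord1 j) frame_coord n_perp mxE.
apply: trmx_inj; rewrite trmx0 -[n^T]mul1mx -frame_left_inv -mulmxA Fn0.
exact: mulmx0.
Qed.

Lemma frame_quad n : 4 * lorentz n n = descartes_quad (fun k => lorentz (f k) n).
Proof.
set c := F *m lorentz_mx *m n^T.
have -> : lorentz n n = (c^T *m (4^-1 *: gram_mx) *m c) ord0 ord0.
  rewrite lorentz_mxE /c !trmx_mul trmxK lorentz_mxT.
  have -> : n *m (lorentz_mx *m F^T) *m (4^-1 *: gram_mx) = n *m lorentz_mx *m F_inv.
    by rewrite /F_inv -!mulmxA scalemxAr.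
  by rewrite -[_ *m F_inv *m _]mulmxA (mulmxA F_inv) frame_left_inv mul1mx.
by rewrite descartes_quad_gram /descartes_quad !sum_ord4 /c !frame_coord.
Qed.

Variable i : 'I_4.

Definition reflect_row : vec := 2 *: \sum_(l | l != i) f l - f i.

Lemma lorentz_reflect_rowl n :
  lorentz reflect_row n = 2 * \sum_(l | l != i) lorentz (f l) n - lorentz (f i) n.
Proof. by rewrite /reflect_row lorentzBl lorentzZl lorentz_suml. Qed.

Lemma lorentz_reflect_row k : lorentz (f k) reflect_row = if k == i then -7 else -1.
Proof.
rewrite lorentzC lorentz_reflect_rowl big_mkcond sum_ord4 !frame_f.
by case_ord4 i; case_ord4 k => /=; lra.
Qed.

Lemma reflect_row_norm : lorentz reflect_row reflect_row = 1.
Proof.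
have := frame_quad reflect_row.
by rewrite /descartes_quad !sum_ord4 !lorentz_reflect_row; case_ord4 i => /=; lra.
Qed.

Lemma frame_reflect : descartes_frame (fun k => if k == i then reflect_row else f k).
Proof.
move=> a b /=; case: (eqVneq a i) => [-> | ai]; case: (eqVneq b i) => [eb | bi].
- exact: reflect_row_norm.
- by rewrite lorentzC lorentz_reflect_row (negbTE bi).
- by rewrite eb lorentz_reflect_row (negbTE ai).
- exact: frame_f.
Qed.

(* [t := lorentz (f i) w] solves [t^2 + 6 t - 7 = 0]; the root [1] forces [w = f i]. *)
Lemma reflect_row_unique w : lorentz w w = 1 ->
  (forall k, k != i -> lorentz (f k) w = -1) -> w != f i -> w = reflect_row.
Proof.
move=> w_norm w_tan w_neq.
have fw k : lorentz (f k) w = if k == i then lorentz (f i) w else -1.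
  by case: (eqVneq k i) => [-> | ki]; last exact: w_tan.
set t := lorentz (f i) w in fw.
have t_root : (t - 1) * (t + 7) = 0.
  have := frame_quad w; rewrite w_norm /descartes_quad !sum_ord4 !fw.
  by case_ord4 i => /=; lra.
have perp_sub v k : lorentz (f k) w = lorentz (f k) v -> lorentz (f k) (w - v) = 0.
  by rewrite lorentzBr => ->; rewrite subrr.
move/eqP: t_root; rewrite mulf_eq0 => /orP [/eqP t1 | /eqP t7].
  case/eqP: w_neq; apply/eqP; rewrite -subr_eq0; apply/eqP.
  apply: frame_nondegenerate => k; apply: perp_sub.
  by rewrite fw frame_f; case: (k == i); lra.
apply/eqP; rewrite -subr_eq0; apply/eqP.
apply: frame_nondegenerate => k; apply: perp_sub.
by rewrite fw lorentz_reflect_row; case: (k == i); lra.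
Qed.

Lemma reflect_row_null_perp n : lorentz n n = 0 ->
  lorentz (f i) n = 0 -> lorentz reflect_row n = 0 -> n = 0.
Proof.
move=> null perp_i; rewrite lorentz_reflect_rowl perp_i subr0 => /eqP.
rewrite mulf_eq0 pnatr_eq0 /= => /eqP perp_sum; apply: frame_nondegenerate.
apply: descartes_quad_sum0; last by rewrite -frame_quad null mulr0.
by rewrite (bigD1 i) //= perp_i perp_sum addr0.
Qed.

Lemma frame_null_perp3 n a b c : a != b -> a != c -> b != c -> lorentz n n = 0 ->
  lorentz (f a) n = 0 -> lorentz (f b) n = 0 -> lorentz (f c) n = 0 -> n = 0.
Proof.
move=> ab ac bc null na nb nc; apply: frame_nondegenerate.
by apply: (descartes_quad_three0 ab ac bc na nb nc); rewrite -frame_quad null mulr0.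
Qed.

End Frame.

Lemma reflect_rowN f i : reflect_row (fun k => - f k) i = - reflect_row f i.
Proof. by rewrite /reflect_row sumrN scalerN opprB opprK addrC. Qed.

End LorentzForm.

(** * Circles as unit vectors, points as null vectors *)

Implicit Types (C D : ocircle R) (p : point R) (a b r m : R).

Definition wrow C : vec := \row_j nth 0 (wvec C) j.

(* A finite point is the circle of radius 0 centered at it, the point at
   infinity the degenerate line [x . 0 = 1/2]. *)
Definition pt_row (q : option (point R)) : vec :=
  match q with
  | Some p => row4 (p.1 ^+ 2 + p.2 ^+ 2) 1 p.1 p.2
  | None => row4 1 0 0 0
  end.

Lemma wrow_circ a b r :
  wrow (OCirc a b r) = row4 ((a ^+ 2 + b ^+ 2 - r ^+ 2) / r) r^-1 (a / r) (b / r).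
Proof. by []. Qed.

Lemma wrow_line h1 h2 m : wrow (OLine h1 h2 m) = row4 (2 * m) 0 h1 h2.
Proof. by []. Qed.

Lemma lorentz_circ_circ a b r a' b' r' : r != 0 -> r' != 0 ->
  lorentz (wrow (OCirc a b r)) (wrow (OCirc a' b' r'))
  = (r ^+ 2 + r' ^+ 2 - ((a - a') ^+ 2 + (b - b') ^+ 2)) / (2 * r * r').
Proof. by move=> r0 r'0; rewrite !wrow_circ lorentz_row4; field; rewrite r0 r'0. Qed.

Lemma lorentz_circ_line a b r h1 h2 m : r != 0 ->
  lorentz (wrow (OCirc a b r)) (wrow (OLine h1 h2 m)) = (a * h1 + b * h2 - m) / r.
Proof. by move=> r0; rewrite wrow_circ wrow_line lorentz_row4; field; rewrite r0. Qed.

Lemma lorentz_line_line h1 h2 m h1' h2' m' :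
  lorentz (wrow (OLine h1 h2 m)) (wrow (OLine h1' h2' m')) = h1 * h1' + h2 * h2'.
Proof. rewrite !wrow_line lorentz_row4; ring. Qed.

Lemma lorentz_circ_pt a b r p : r != 0 ->
  lorentz (wrow (OCirc a b r)) (pt_row (Some p))
  = (r ^+ 2 - ((p.1 - a) ^+ 2 + (p.2 - b) ^+ 2)) / (2 * r).
Proof. by move=> r0; rewrite wrow_circ lorentz_row4; field; rewrite r0. Qed.

Lemma lorentz_line_pt h1 h2 m p :
  lorentz (wrow (OLine h1 h2 m)) (pt_row (Some p)) = p.1 * h1 + p.2 * h2 - m.
Proof. by rewrite wrow_line lorentz_row4; field. Qed.

Lemma lorentz_line_inf h1 h2 m : lorentz (wrow (OLine h1 h2 m)) (pt_row None) = 0.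
Proof. by rewrite wrow_line lorentz_row4; field. Qed.

Lemma lorentz_pt_pt q : lorentz (pt_row q) (pt_row q) = 0.
Proof. by case: q => [p|]; rewrite lorentz_row4; field. Qed.

Lemma pt_row_neq0 q : pt_row q != 0.
Proof.
apply/eqP => /rowP /(_ (if q is Some _ then o1 else o0)).
by case: q => [p|]; rewrite !mxE /=; apply/eqP; exact: oner_neq0.
Qed.

Lemma valid_reverse C : valid C -> valid (reverse C).
Proof. by case: C => [a b r|h1 h2 m] /=; rewrite ?oppr_eq0 ?sqrrN. Qed.

Lemma wrow_reverse C : wrow (reverse C) = - wrow C.
Proof.
apply/rowP => j; rewrite !mxE.
case: C => [a b r|h1 h2 m] /=; case_ord4 j => /=;
  rewrite ?invrN ?mulrN ?mulNr ?opprK ?sqrrN //; ring.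
Qed.

Lemma lorentz_wrow_norm C : valid C -> lorentz (wrow C) (wrow C) = 1.
Proof.
case: C => [a b r|h1 h2 m] /= C_valid.
- by rewrite lorentz_circ_circ // !subrr expr0n /= !addr0 subr0; field; rewrite C_valid.
- by rewrite lorentz_line_line -!expr2.
Qed.

Lemma wrow_inj C D : valid C -> valid D -> wrow C = wrow D -> C = D.
Proof.
case: C => [a b r|h1 h2 m]; case: D => [a' b' r'|h1' h2' m'] /= C_valid D_valid;
  move/rowP=> eqCD; have := (eqCD o0, eqCD o1, eqCD o2, eqCD o3); rewrite !mxE /=.
- case=> [[[_ /(congr1 GRing.inv)]]]; rewrite !invrK => <- ea eb.
  by rewrite -(divfK C_valid a) ea divfK // -(divfK C_valid b) eb divfK.
- by case=> [[[_ /eqP]]]; rewrite invr_eq0 (negbTE C_valid).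
- by case=> [[[_ /eqP]]]; rewrite eq_sym invr_eq0 (negbTE D_valid).
- by case=> [[[em _] -> ->]]; congr OLine; lra.
Qed.

Lemma div_double_eq0 (x r : R) : r != 0 -> (x / (2 * r) == 0) = (x == 0).
Proof. by move=> r0; rewrite mulf_eq0 invr_eq0 mulf_eq0 (negbTE r0) pnatr_eq0 !orbF. Qed.

Lemma div_double_gt0 (x r : R) : r != 0 -> (0 < x / (2 * r)) = (0 < x * r).
Proof.
move=> r0; have -> : x / (2 * r) = (x * r) * (2 * r ^+ 2)^-1 by field.
by rewrite pmulr_lgt0 // invr_gt0 mulr_gt0 // exprn_even_gt0.
Qed.

Lemma on_lorentz C p : valid C -> on C p <-> lorentz (wrow C) (pt_row (Some p)) = 0.
Proof.
case: C => [a b r|h1 h2 m] /= C_valid.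
- rewrite lorentz_circ_pt //; split => [->|/eqP]; first by rewrite subrr mul0r.
  by rewrite div_double_eq0 // subr_eq0 => /eqP ->.
- by rewrite lorentz_line_pt; split => [->|/eqP]; [rewrite subrr | rewrite subr_eq0 => /eqP].
Qed.

Lemma interior_circE a b r p : r != 0 ->
  interior (OCirc a b r) p <-> 0 < (r ^+ 2 - ((p.1 - a) ^+ 2 + (p.2 - b) ^+ 2)) * r.
Proof.
move=> r0 /=; set d := _ + _; case: (ltrP 0 r) => r_sgn; first by split; nra.
have r_lt0 : r < 0 by rewrite lt_neqAle r0 r_sgn.
split; nra.
Qed.

Lemma interior_lorentz C p :
  valid C -> interior C p <-> 0 < lorentz (wrow C) (pt_row (Some p)).
Proof.
case: C => [a b r|h1 h2 m] /= C_valid.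
- by rewrite lorentz_circ_pt // div_double_gt0 // -interior_circE.
- by rewrite lorentz_line_pt subr_gt0.
Qed.

Lemma exists_on C : valid C -> exists p, on C p.
Proof.
case: C => [a b r|h1 h2 m] /= C_valid.
- by exists (a + r, b) => /=; rewrite addrAC subrr add0r subrr expr0n addr0.
- by exists (m * h1, m * h2) => /=; rewrite -!mulrA -mulrDr -!expr2 C_valid mulr1.
Qed.

Lemma tangent_at_sym C D q : tangent_at C D q -> tangent_at D C q.
Proof.
case: q => [p|] /= => [[not_lines common] | [lC [lD disj]]].
- by split=> [[lD lC] | y]; [exact: not_lines | rewrite -common; split; case].
- by split=> //; split=> // y [yD yC]; exact: (disj y).
Qed.

Lemma tangent_sym C D : tangent C D -> tangent D C.
Proof. by case=> q /tangent_at_sym; exists q. Qed.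

Lemma tangent_at_lorentz C D q : valid C -> valid D -> tangent_at C D q ->
  lorentz (wrow C) (pt_row q) = 0 /\ lorentz (wrow D) (pt_row q) = 0.
Proof.
move=> C_valid D_valid; case: q => [p [_ common] | [lC [lD _]]].
  by have [pC pD] := (common p).2 erefl; split; apply/on_lorentz.
by case: C lC {C_valid} => // ? ? ? _; case: D lD {D_valid} => // ? ? ? _; rewrite !lorentz_line_inf.
Qed.

Lemma sqr_add_eq0 (x y : R) : x ^+ 2 + y ^+ 2 = 0 -> x = 0 /\ y = 0.
Proof. by move/eqP; rewrite paddr_eq0 ?sqr_ge0 // !sqrf_eq0 => /andP [/eqP -> /eqP ->]. Qed.

(* The reflection in the line of centers fixes the unique common point, which
   therefore lies on that line: the distance of the centers is |r +- r'|. *)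
Lemma tangent_lorentz_sqr_cc a b r a' b' r' q : r != 0 -> r' != 0 ->
  tangent_at (OCirc a b r) (OCirc a' b' r') q ->
  lorentz (wrow (OCirc a b r)) (wrow (OCirc a' b' r')) ^+ 2 = 1.
Proof.
move=> r0 r'0; case: q => [[p1 p2] [_ common] |[]//].
have [/= pC pC'] := (common (p1, p2)).2 erefl.
have reflect_common y1 y2 : (y1 - a) ^+ 2 + (y2 - b) ^+ 2 = (p1 - a) ^+ 2 + (p2 - b) ^+ 2 ->
    (y1 - a') ^+ 2 + (y2 - b') ^+ 2 = (p1 - a') ^+ 2 + (p2 - b') ^+ 2 -> y1 = p1 /\ y2 = p2.
  move=> e e'; have /= := (common (y1, y2)).1; rewrite e e' pC pC'.
  by move=> /(_ (conj erefl erefl)) [-> ->].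
set E := (a' - a) ^+ 2 + (b' - b) ^+ 2.
have [E0 | E_neq0] := eqVneq E 0.
  have [/eqP + /eqP] := sqr_add_eq0 E0; rewrite !subr_eq0 => /eqP ea /eqP eb.
  subst a' b'.
  have [e1 e2] : 2 * a - p1 = p1 /\ 2 * b - p2 = p2 by apply: reflect_common; ring.
  have : r ^+ 2 = 0 by rewrite -pC; nra.
  by move/eqP; rewrite sqrf_eq0 (negbTE r0).
set k := ((p1 - a) * (a' - a) + (p2 - b) * (b' - b)) / E.
have [e1 e2] : 2 * a - p1 + 2 * k * (a' - a) = p1 /\ 2 * b - p2 + 2 * k * (b' - b) = p2.
  by apply: reflect_common; rewrite /k /E; field.
have hp1 : p1 = a + k * (a' - a) by lra.
have hp2 : p2 = b + k * (b' - b) by lra.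
have num : (r ^+ 2 + r' ^+ 2 - ((a - a') ^+ 2 + (b - b') ^+ 2)) ^+ 2 = (2 * r * r') ^+ 2.
  have -> : (2 * r * r') ^+ 2 = 4 * r ^+ 2 * r' ^+ 2 by ring.
  by rewrite -pC -pC' hp1 hp2; ring.
by rewrite lorentz_circ_circ // expr_div_n num divff // expf_neq0 // !mulf_neq0 // pnatr_eq0.
Qed.

(* Here the reflection in the normal line through the center fixes the common point. *)
Lemma tangent_lorentz_sqr_cl a b r h1 h2 m q : r != 0 -> h1 ^+ 2 + h2 ^+ 2 = 1 ->
  tangent_at (OCirc a b r) (OLine h1 h2 m) q ->
  lorentz (wrow (OCirc a b r)) (wrow (OLine h1 h2 m)) ^+ 2 = 1.
Proof.
move=> r0 h_unit; case: q => [[p1 p2] [_ common] |[]//].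
have [/= pC pL] := (common (p1, p2)).2 erefl.
set s := - (p1 - a) * h2 + (p2 - b) * h1.
have [e1 e2] : p1 + 2 * s * h2 = p1 /\ p2 - 2 * s * h1 = p2.
  have /= := (common (p1 + 2 * s * h2, p2 - 2 * s * h1)).1.
  have -> : (p1 + 2 * s * h2 - a) ^+ 2 + (p2 - 2 * s * h1 - b) ^+ 2
    = (p1 - a) ^+ 2 + (p2 - b) ^+ 2 + 4 * s ^+ 2 * (h1 ^+ 2 + h2 ^+ 2 - 1) by rewrite /s; ring.
  have -> : (p1 + 2 * s * h2) * h1 + (p2 - 2 * s * h1) * h2 = p1 * h1 + p2 * h2 by ring.
  rewrite h_unit subrr mulr0 addr0 pC pL.
  by move=> /(_ (conj erefl erefl)) [-> ->].
have s0 : s = 0.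
  have [sh1 sh2] : s * h1 = 0 /\ s * h2 = 0 by split; lra.
  have -> : s = (s * h1) * h1 + (s * h2) * h2.
    by rewrite -!mulrA -mulrDr -!expr2 h_unit mulr1.
  by rewrite sh1 sh2 !mul0r addr0.
have num : (a * h1 + b * h2 - m) ^+ 2 = r ^+ 2.
  rewrite -pL -pC.
  have -> : (a * h1 + b * h2 - (p1 * h1 + p2 * h2)) ^+ 2
    = ((p1 - a) ^+ 2 + (p2 - b) ^+ 2) * (h1 ^+ 2 + h2 ^+ 2) - s ^+ 2 by rewrite /s; ring.
  by rewrite h_unit s0 mulr1 expr0n subr0.
by rewrite lorentz_circ_line // expr_div_n num divff // expf_neq0.
Qed.

Lemma tangent_lorentz_sqr_ll h1 h2 m h1' h2' m' q :
  h1 ^+ 2 + h2 ^+ 2 = 1 -> h1' ^+ 2 + h2' ^+ 2 = 1 ->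
  tangent_at (OLine h1 h2 m) (OLine h1' h2' m') q ->
  lorentz (wrow (OLine h1 h2 m)) (wrow (OLine h1' h2' m')) ^+ 2 = 1.
Proof.
move=> h_unit h'_unit; case: q => [p [/(_ (conj I I)) []] | [_ [_ disj]]].
rewrite lorentz_line_line; set d := h1 * h2' - h2 * h1'.
have [d0 | d_neq0] := eqVneq d 0.
  have -> : (h1 * h1' + h2 * h2') ^+ 2
    = (h1 ^+ 2 + h2 ^+ 2) * (h1' ^+ 2 + h2' ^+ 2) - d ^+ 2 by rewrite /d; ring.
  by rewrite h_unit h'_unit d0 expr0n subr0 mulr1.
case: (disj ((m * h2' - m' * h2) / d, (h1 * m' - h1' * m) / d)) => /=.
by split; rewrite /d; field; rewrite -/d d_neq0.
Qed.

Lemma tangent_lorentz_sqr C D : valid C -> valid D -> tangent C D ->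
  lorentz (wrow C) (wrow D) ^+ 2 = 1.
Proof.
move=> + + [q tCD].
case: C tCD => [a b r|h1 h2 m]; case: D => [a' b' r'|h1' h2' m'] /= tCD C_valid D_valid.
- exact: tangent_lorentz_sqr_cc tCD.
- exact: tangent_lorentz_sqr_cl tCD.
- by rewrite lorentzC; apply: tangent_lorentz_sqr_cl (tangent_at_sym tCD).
- exact: tangent_lorentz_sqr_ll tCD.
Qed.

Lemma interior_circ_center a b r : 0 < r -> interior (OCirc a b r) (a, b).
Proof. by move=> r_gt0 /=; rewrite r_gt0 !subrr expr0n addr0 exprn_gt0. Qed.

Lemma interior_tangent_center a b r a' b' r' : 0 < r ->
  (0 < r' /\ r <= r') \/ r' < 0 ->
  (a - a') ^+ 2 + (b - b') ^+ 2 = (r - r') ^+ 2 -> interior (OCirc a' b' r') (a, b).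
Proof.
move=> r_gt0 [[r'_gt0 le_rr'] | r'_lt0] d_eq /=.
- by rewrite r'_gt0 d_eq; nra.
- by rewrite (lt_gtF r'_lt0) d_eq; nra.
Qed.

(* Two negatively oriented circles both contain every point far enough away. *)
Lemma interiors_meet_neg a b r a' b' r' : r < 0 -> r' < 0 ->
  exists p, interior (OCirc a b r) p /\ interior (OCirc a' b' r') p.
Proof.
move=> r_lt0 r'_lt0; set T := 1 + `|r| + `|r'| + `|a - a'|.
have norm_bounds (x : R) : - `|x| <= x /\ x <= `|x|.
  by have := ler_norm (- x); rewrite normrN; have := ler_norm x; split; lra.
have lt_sqr (x y : R) : 0 < x - y -> 0 < x + y -> y ^+ 2 < x ^+ 2.
  by move=> *; rewrite -subr_gt0 subr_sqr mulr_gt0.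
have [[r1 r2] [[r'1 r'2] [d1 d2]]] := (norm_bounds r, (norm_bounds r', norm_bounds (a - a'))).
exists (a + T, b) => /=; rewrite (lt_gtF r_lt0) (lt_gtF r'_lt0) subrr expr0n addr0.
have -> : a + T - a = T by ring.
have -> : a + T - a' = T + (a - a') by ring.
split; first by apply: lt_sqr; rewrite /T; lra.
have far : r' ^+ 2 < (T + (a - a')) ^+ 2 by apply: lt_sqr; rewrite /T; lra.
by apply: (lt_le_trans far); rewrite lerDl sqr_ge0.
Qed.

Lemma lorentz1_interiors_meet_cc a b r a' b' r' : r != 0 -> r' != 0 ->
  (a - a') ^+ 2 + (b - b') ^+ 2 = (r - r') ^+ 2 ->
  exists p, interior (OCirc a b r) p /\ interior (OCirc a' b' r') p.
Proof.
move=> r0 r'0 d_eq.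
have d_eq' : (a' - a) ^+ 2 + (b' - b) ^+ 2 = (r' - r) ^+ 2.
  by rewrite -[a' - a]opprB -[b' - b]opprB -[r' - r]opprB !sqrrN.
have [r_gt0 | r_le0] := ltrP 0 r; have [r'_gt0 | r'_le0] := ltrP 0 r'.
- have [le_rr' | lt_r'r] := lerP r r'.
    exists (a, b); split; first exact: interior_circ_center.
    by apply: (interior_tangent_center r_gt0 _ d_eq); left.
  exists (a', b'); split; last exact: interior_circ_center.
  by apply: (interior_tangent_center r'_gt0 _ d_eq'); left; split => //; exact: ltW.
- have r'_lt0 : r' < 0 by rewrite lt_neqAle r'0.
  exists (a, b); split; first exact: interior_circ_center.
  by apply: (interior_tangent_center r_gt0 _ d_eq); right.
- have r_lt0 : r < 0 by rewrite lt_neqAle r0.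
  exists (a', b'); split; last exact: interior_circ_center.
  by apply: (interior_tangent_center r'_gt0 _ d_eq'); right.
- apply: interiors_meet_neg; by rewrite lt_neqAle ?r0 ?r'0.
Qed.

Lemma lorentz1_interiors_meet_cl a b r h1 h2 m : r != 0 -> h1 ^+ 2 + h2 ^+ 2 = 1 ->
  a * h1 + b * h2 - m = r ->
  exists p, interior (OCirc a b r) p /\ interior (OLine h1 h2 m) p.
Proof.
move=> r0 h_unit dist_r; have [r_gt0 | r_le0] := ltrP 0 r.
  by exists (a, b); split; [exact: interior_circ_center | rewrite /= -subr_gt0 dist_r].
have r_lt0 : r < 0 by rewrite lt_neqAle r0.
set t := 1 - 2 * r; exists (a + t * h1, b + t * h2); split.
  apply/interior_circE => //=.
  have -> : (a + t * h1 - a) ^+ 2 + (b + t * h2 - b) ^+ 2 = t ^+ 2.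
    by rewrite -[t ^+ 2]mulr1 -h_unit; ring.
  have -> : (r ^+ 2 - t ^+ 2) * r = (t + r) * (t - r) * (- r) by ring.
  by rewrite !mulr_gt0 // /t; lra.
rewrite /= -subr_gt0.
have -> : (a + t * h1) * h1 + (b + t * h2) * h2 - m
  = (a * h1 + b * h2 - m) + t * (h1 ^+ 2 + h2 ^+ 2) by ring.
by rewrite h_unit dist_r mulr1 /t; lra.
Qed.

Lemma lorentz1_interiors_meet C D : valid C -> valid D ->
  lorentz (wrow C) (wrow D) = 1 -> exists p, interior C p /\ interior D p.
Proof.
have meet_circ a b r D' : r != 0 -> valid D' ->
    lorentz (wrow (OCirc a b r)) (wrow D') = 1 ->
    exists p, interior (OCirc a b r) p /\ interior D' p.
  case: D' => [a' b' r' | h1 h2 m] r0 /= D_valid.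
  - rewrite lorentz_circ_circ // => /divr1_eq d_eq.
    by apply: lorentz1_interiors_meet_cc => //; lra.
  - by rewrite lorentz_circ_line // => /divr1_eq; exact: lorentz1_interiors_meet_cl.
case: C => [a b r | h1 h2 m] C_valid D_valid; first exact: meet_circ.
case: D D_valid => [a' b' r' | h1' h2' m'] D_valid.
  rewrite lorentzC => /(meet_circ _ _ _ _ D_valid C_valid) [p [pD pC]].
  by exists p.
rewrite lorentz_line_line => hh'; set t := 1 + m ^+ 2 + m' ^+ 2.
exists (t * h1, t * h2) => /=.
have -> : t * h1 * h1 + t * h2 * h2 = t * (h1 ^+ 2 + h2 ^+ 2) by ring.
have -> : t * h1 * h1' + t * h2 * h2' = t * (h1 * h1' + h2 * h2') by ring.
by rewrite hh' C_valid mulr1 /t; split; nra.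
Qed.

(* The tangency point divides the segment of centers in the ratio [r : r']. *)
Lemma lorentzN1_tangent_cc a b r a' b' r' : r != 0 -> r' != 0 -> r + r' != 0 ->
  (a - a') ^+ 2 + (b - b') ^+ 2 = (r + r') ^+ 2 -> tangent (OCirc a b r) (OCirc a' b' r').
Proof.
move=> r0 r'0; set s := r + r' => s0 d_eq.
exists (Some (a + r / s * (a' - a), b + r / s * (b' - b))); split; first by case.
move=> [y1 y2] /=; split => [[yC yC'] | [-> ->]].
  set X := s * (y1 - a) - r * (a' - a); set Y := s * (y2 - b) - r * (b' - b).
  have : X ^+ 2 + Y ^+ 2 = s * r' * ((y1 - a) ^+ 2 + (y2 - b) ^+ 2 - r ^+ 2)
     - r * r' * ((a - a') ^+ 2 + (b - b') ^+ 2 - s ^+ 2)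
     + r * s * ((y1 - a') ^+ 2 + (y2 - b') ^+ 2 - r' ^+ 2) by rewrite /X /Y /s; ring.
  rewrite yC yC' d_eq !subrr !mulr0 subr0 addr0 => /sqr_add_eq0 [X0 Y0].
  have y1E : y1 = X / s + (a + r / s * (a' - a)) by rewrite /X; field.
  have y2E : y2 = Y / s + (b + r / s * (b' - b)) by rewrite /Y; field.
  by rewrite y1E y2E X0 Y0 !mul0r !add0r.
split.
- have -> : (a + r / s * (a' - a) - a) ^+ 2 + (b + r / s * (b' - b) - b) ^+ 2
    = (r / s) ^+ 2 * ((a - a') ^+ 2 + (b - b') ^+ 2) by ring.
  by rewrite d_eq; field.
- have -> : (a + r / s * (a' - a) - a') ^+ 2 + (b + r / s * (b' - b) - b') ^+ 2
    = (r' / s) ^+ 2 * ((a - a') ^+ 2 + (b - b') ^+ 2) by rewrite /s; field; rewrite -/s.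
  by rewrite d_eq; field.
Qed.

Lemma lorentzN1_tangent_cl a b r h1 h2 m : r != 0 -> h1 ^+ 2 + h2 ^+ 2 = 1 ->
  a * h1 + b * h2 - m = - r -> tangent (OCirc a b r) (OLine h1 h2 m).
Proof.
move=> r0 h_unit dist_r; exists (Some (a + r * h1, b + r * h2)); split; first by case.
move=> [y1 y2] /=; split => [[yC yL] | [-> ->]].
  have : (y1 - a - r * h1) ^+ 2 + (y2 - b - r * h2) ^+ 2 =
    ((y1 - a) ^+ 2 + (y2 - b) ^+ 2 - r ^+ 2) - 2 * r * (y1 * h1 + y2 * h2 - m)
    + 2 * r * (a * h1 + b * h2 - m + r) + r ^+ 2 * (h1 ^+ 2 + h2 ^+ 2 - 1) by ring.
  rewrite yC yL dist_r h_unit !subrr addNr !mulr0 subr0 !addr0 => /sqr_add_eq0 [e1 e2].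
  by congr (_, _); lra.
split.
- have -> : (a + r * h1 - a) ^+ 2 + (b + r * h2 - b) ^+ 2 = r ^+ 2 * (h1 ^+ 2 + h2 ^+ 2) by ring.
  by rewrite h_unit mulr1.
- have -> : (a + r * h1) * h1 + (b + r * h2) * h2
    = (a * h1 + b * h2 - m) + r * (h1 ^+ 2 + h2 ^+ 2) + m by ring.
  by rewrite h_unit dist_r mulr1; ring.
Qed.

Lemma lorentzN1_tangent C D : valid C -> valid D ->
  lorentz (wrow C) (wrow D) = -1 -> wrow C <> - wrow D -> tangent C D.
Proof.
have tangent_circ a b r D' : r != 0 -> valid D' ->
    lorentz (wrow (OCirc a b r)) (wrow D') = -1 ->
    wrow (OCirc a b r) <> - wrow D' -> tangent (OCirc a b r) D'.
  case: D' => [a' b' r' | h1 h2 m] r0 /= D_valid; last first.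
    by rewrite lorentz_circ_line // => /(canRL (divfK r0)) ? _; apply: lorentzN1_tangent_cl; lra.
  have den0 : 2 * r * r' != 0 by rewrite !mulf_neq0 // pnatr_eq0.
  rewrite lorentz_circ_circ // => /(canRL (divfK den0)) d_eq not_rev.
  have [s0 | s_neq0] := eqVneq (r + r') 0; last by apply: lorentzN1_tangent_cc => //; lra.
  have r'E : r' = - r by lra.
  have [/eqP + /eqP] : a - a' = 0 /\ b - b' = 0.
    by apply: sqr_add_eq0; rewrite r'E in d_eq; lra.
  rewrite !subr_eq0 => /eqP ea /eqP eb; subst a' b' r'; case: not_rev.
  by rewrite -[OCirc a b (- r)]/(reverse (OCirc a b r)) wrow_reverse opprK.
case: C => [a b r | h1 h2 m] C_valid D_valid; first exact: tangent_circ.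
case: D D_valid => [a' b' r' | h1' h2' m'] D_valid hh' not_rev.
  apply/tangent_sym/tangent_circ; rewrite 1?lorentzC //.
  by move=> e; case: not_rev; rewrite e opprK.
move: hh'; rewrite lorentz_line_line => hh'.
have [/eqP + /eqP] : h1' + h1 = 0 /\ h2' + h2 = 0.
  apply: sqr_add_eq0; have -> : (h1' + h1) ^+ 2 + (h2' + h2) ^+ 2
    = (h1 ^+ 2 + h2 ^+ 2) + (h1' ^+ 2 + h2' ^+ 2) + 2 * (h1 * h1' + h2 * h2') by ring.
  by rewrite C_valid D_valid hh'; ring.
rewrite !addr_eq0 => /eqP e1 /eqP e2; subst h1' h2'.
have [m'E | m'_neq] := eqVneq m' (- m).
  by subst m'; case: not_rev; rewrite -[OLine (- h1) _ _]/(reverse (OLine h1 h2 m)) wrow_reverse opprK.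
exists None => /=; split => //; split => // y [yC yD].
by move/eqP: m'_neq; apply; rewrite -yD -yC; ring.
Qed.

Lemma wrow_surj (w : vec) : lorentz w w = 1 -> exists C, valid C /\ wrow C = w.
Proof.
rewrite /lorentz => w_norm; have [w1_0 | w1_neq0] := eqVneq (w ord0 o1) 0.
  exists (OLine (w ord0 o2) (w ord0 o3) (w ord0 o0 / 2)); split.
    by rewrite /= -w_norm w1_0 mulr0 mul0r addr0 mul0r subr0 !expr2.
  by apply: row4P; rewrite !mxE /= w1_0; split => //; field.
exists (OCirc (w ord0 o2 / w ord0 o1) (w ord0 o3 / w ord0 o1) (w ord0 o1)^-1); split.
  by rewrite /= invr_eq0.
apply: row4P; rewrite !mxE /= invrK !divfK //; split => //.
have w01 : w ord0 o0 * w ord0 o1 = w ord0 o2 ^+ 2 + w ord0 o3 ^+ 2 - 1 by rewrite -w_norm; field.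
by apply: (mulIf w1_neq0); rewrite w01; field.
Qed.

(** * Descartes configurations *)

Implicit Types (E : 'I_4 -> ocircle R).

Local Notation wframe E := (fun k => wrow (E k)).

Lemma oriented_descartes_frame E : oriented_descartes E -> descartes_frame (wframe E).
Proof.
move=> [[E_valid [E_tan _]] E_disj] a b /=.
have [<- | ab] := eqVneq a b; first exact: lorentz_wrow_norm.
have /eqP := tangent_lorentz_sqr (E_valid a) (E_valid b) (E_tan a b ab).
rewrite sqrf_eq1 => /orP [/eqP wab1 | /eqP //]; exfalso.
case: E_disj => disj.
  have [p] := lorentz1_interiors_meet (E_valid a) (E_valid b) wab1.
  exact: disj a b ab p.
have [|p] := lorentz1_interiors_meet (valid_reverse (E_valid a)) (valid_reverse (E_valid b)).
  by rewrite !wrow_reverse lorentzNl lorentzNr opprK.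
exact: disj a b ab p.
Qed.

Lemma exists_ord4_neq2 (a b : 'I_4) : exists c, c != a /\ c != b.
Proof. by case_ord4 a; case_ord4 b; by [exists o0 | exists o1 | exists o2 | exists o3]. Qed.

Lemma descartes_of_frame E : (forall k, valid (E k)) -> descartes_frame (wframe E) ->
  descartes E.
Proof.
move=> E_valid E_frame; split=> //; split=> [a b ab | a b k l q q' ab kl tab tkl eqq].
  apply: lorentzN1_tangent => //; first by rewrite E_frame (negbTE ab).
  move=> w_opp; have [c [ca cb]] := exists_ord4_neq2 a b.
  have := E_frame a c; rewrite w_opp lorentzNl E_frame (eq_sym a) (eq_sym b).
  by rewrite (negbTE ca) (negbTE cb) => e; clear -e; lra.
subst q'; have [na nb] := tangent_at_lorentz (E_valid a) (E_valid b) tab.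
have [nk nl] := tangent_at_lorentz (E_valid k) (E_valid l) tkl.
have in_ab c : c != a -> c != b -> lorentz (wrow (E c)) (pt_row q) = 0 -> False.
  move=> ca cb nc; apply: (negP (pt_row_neq0 q)); apply/eqP.
  by apply: (frame_null_perp3 E_frame ab _ _ (lorentz_pt_pt q) na nb nc); rewrite eq_sym.
have k_ab : (k == a) || (k == b) by apply: contraT => /norP [ka kb]; case: (in_ab k).
have l_ab : (l == a) || (l == b) by apply: contraT => /norP [la lb]; case: (in_ab l).
move: kl k_ab l_ab => /[swap] /orP [] /eqP -> /[swap] /orP [] /eqP ->;
  by rewrite ?eqxx // setUC.
Qed.

Section Reflection.
Variables (E : 'I_4 -> ocircle R) (i : 'I_4) (C : ocircle R).
Hypothesis wC : wrow C = reflect_row (wframe E) i.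

Lemma frame_replace_reflect :
  descartes_frame (wframe E) -> descartes_frame (wframe (replace E i C)).
Proof.
move=> E_frame a b; have := frame_reflect E_frame i a b.
by rewrite /replace /=; case: (a == i); case: (b == i); rewrite /= ?wC.
Qed.

Lemma disjoint_interiors_reflect : (forall k, valid (E k)) -> valid C ->
  descartes_frame (wframe E) -> disjoint_interiors E -> disjoint_interiors (replace E i C).
Proof.
move=> E_valid C_valid E_frame E_disj a b ab p.
(* [p] is inside [E k] iff [u k > 0], and inside [C] iff the other Vieta root is positive. *)
set u := fun k => lorentz (wrow (E k)) (pt_row (Some p)).
have u_quad : descartes_quad u = 0 by rewrite -frame_quad // lorentz_pt_pt mulr0.
have interior_u k : interior (E k) p <-> 0 < u k := interior_lorentz p (E_valid k).
have interior_C : interior C p <-> 0 < 2 * \sum_(l | l != i) u l - u i.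
  by rewrite (interior_lorentz p C_valid) wC lorentz_reflect_rowl.
have reflect_excl j : j != i -> 0 < u j -> ~ 0 < 2 * \sum_(l | l != i) u l - u i.
  move=> ji uj_gt0; apply/negP; rewrite -leNgt ltW //.
  apply: (descartes_quad_reflect_lt0 u_quad _ uj_gt0); first by rewrite eq_sym.
  move=> m mj; rewrite leNgt; apply/negP => /interior_u um.
  by apply: (E_disj m j mj p); split=> //; apply/interior_u.
rewrite /replace; case: (eqVneq a i) => [ai | ai]; case: (eqVneq b i) => [bi | bi].
- by move: ab; rewrite ai bi eqxx.
- by case=> /interior_C z_gt0 /interior_u ub; exact: (reflect_excl b bi ub).
- by case=> /interior_u ua /interior_C z_gt0; exact: (reflect_excl a ai ua).
- exact: E_disj.
Qed.

End Reflection.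

Lemma oriented_descartes_reflect E i C : oriented_descartes E -> valid C ->
  wrow C = reflect_row (wframe E) i -> oriented_descartes (replace E i C).
Proof.
move=> E_or C_valid wC; have E_valid := E_or.1.1.
have E_frame := oriented_descartes_frame E_or.
split.
  apply: descartes_of_frame; last exact: frame_replace_reflect.
  by move=> k; rewrite /replace; case: (k == i).
case: E_or => _ [E_disj | rE_disj]; [left | right].
  exact: disjoint_interiors_reflect.
(* Reversing every orientation negates every row and reduces to the first case. *)
set rE := fun k => reverse (E k).
have wrC : wrow (reverse C) = reflect_row (wframe rE) i.
  rewrite wrow_reverse wC -reflect_rowN /reflect_row.
  by congr (_ *: _ - _); [apply: eq_bigr => l _ |]; rewrite wrow_reverse.
have rE_frame : descartes_frame (wframe rE).
  by move=> a b; rewrite !wrow_reverse lorentzNl lorentzNr opprK E_frame.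
have rE_valid k : valid (rE k) by exact: valid_reverse.
have := disjoint_interiors_reflect wrC rE_valid (valid_reverse C_valid) rE_frame rE_disj.
move=> disj a b ab p; have := disj a b ab p.
by rewrite /replace /rE; case: (a == i); case: (b == i).
Qed.

Lemma is_reflected_reflect E i C : oriented_descartes E -> valid C ->
  wrow C = reflect_row (wframe E) i -> is_reflected E i C.
Proof.
move=> E_or C_valid wC; have E_frame := oriented_descartes_frame E_or.
have E'_or := oriented_descartes_reflect E_or C_valid wC.
have [[_ [E'_tan E'_pts]] _] := E'_or.
split=> //; split; last split; last split=> //.
- have [p pC] := exists_on C_valid; exists p => on_eq.
  have pE : on (E i) p by rewrite -on_eq.
  apply: (negP (pt_row_neq0 (Some p))); apply/eqP.
  apply: (reflect_row_null_perp E_frame (lorentz_pt_pt _)).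
    exact/(on_lorentz _ (E_or.1.1 i)).
  by rewrite -wC; apply/(on_lorentz _ C_valid).
- move=> j ji; have := E'_tan i j; rewrite eq_sym ji /replace eqxx (negbTE ji).
  by apply.
- move=> j k l q q' ji ki li kl tCj tkl eqq; subst q'.
  have := E'_pts i j k l q q; rewrite eq_sym ji /replace eqxx !(negbTE ji, negbTE ki, negbTE li).
  move=> /(_ isT kl tCj tkl erefl) /setP /(_ i); rewrite !inE eqxx /=.
  by rewrite !(eq_sym i) (negbTE ki) (negbTE li).
Qed.

Lemma is_reflected_wrow E i C : oriented_descartes E -> is_reflected E i C ->
  wrow C = reflect_row (wframe E) i.
Proof.
move=> E_or [C_valid [[p not_on] [_ [_ E'_or]]]].
apply: (reflect_row_unique (oriented_descartes_frame E_or)).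
- exact: lorentz_wrow_norm.
- move=> k ki; have := oriented_descartes_frame E'_or k i.
  by rewrite /replace /= eqxx (negbTE ki).
- by apply/eqP => /(wrow_inj C_valid (E_or.1.1 i)) CE; apply: not_on; rewrite CE.
Qed.

Lemma row_Wmx E k : row k (Wmx E) = wrow (E k).
Proof. by apply/rowP => j; rewrite !mxE. Qed.

Lemma row_Smx_mul (i k : 'I_4) (A : 'M[R]_4) : row k (Smx R i *m A)
  = if k == i then 2 *: \sum_(l | l != i) row l A - row i A else row k A.
Proof.
rewrite row_mul mulmx_sum_row (bigD1 i) //= !mxE eqxx.
under eq_bigr => l li do rewrite !mxE (negbTE li).
case: eqVneq => [_ | ki]; first by rewrite scaleN1r addrC scaler_sumr.
rewrite scale0r add0r (bigD1 k) //= eqxx scale1r big1 ?addr0 // => l /andP [_ lk].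
by rewrite eq_sym (negbTE lk) scale0r.
Qed.

Lemma Wmx_reflect E i C : wrow C = reflect_row (wframe E) i ->
  Wmx (replace E i C) = Smx R i *m Wmx E.
Proof.
move=> wC; apply/row_matrixP => k; rewrite row_Smx_mul !row_Wmx /replace.
case: (k == i); last by [].
by rewrite wC /reflect_row; under [in RHS]eq_bigr => l _ do rewrite row_Wmx.
Qed.

End Descartes.

Theorem mainTheorem3 (R : realType) (D : 'I_4 -> ocircle R) (i : 'I_4) :
  oriented_descartes D ->
  (exists C' : ocircle R, is_reflected D i C') /\
  (forall C' : ocircle R, is_reflected D i C' ->
     Wmx (replace D i C') = Smx R i *m Wmx D).
Proof.
move=> D_or; have D_frame := oriented_descartes_frame D_or.
have [C [C_valid wC]] := wrow_surj (reflect_row_norm D_frame i).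
split; first by exists C; exact: is_reflected_reflect.
by move=> C' /(is_reflected_wrow D_or); exact: Wmx_reflect.
Qed.
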